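(* Let $\Omega\subseteq\mathbb{R}^{m\times m}$ and let $d:\Omega^2\to\mathbb{R}$ be a pseudometric. Let $n\ge 2$ and define the Fermat distance function induced by $d$ as the map $d_F:\Omega^n\to\mathbb{R}$, $$d_F(A_1,\dots,A_n)=\min_{B\in\Omega}\sum_{i=1}^n d(A_i,B).$$ Then $d_F$ is a pseudo $n$-metric.
   Context: A pseudometric on $\Omega$ is a map $d:\Omega^2\to\mathbb{R}$ with $d(A,B)\ge 0$, $d(A,A)=0$, $d(A,B)=d(B,A)$ and $d(A,C)\le d(A,B)+d(B,C)$ for all $A,B,C\in\Omega$. Notation: $A_{1:n}=(A_1,\dots,A_n)$; for $A_{n+1}\in\Omega$, $A^i_{1:n,n+1}$ denotes the sequence $A_{1:n}$ with its $i$-th entry $A_i$ replaced by $A_{n+1}$; for a permutation $\sigma$ of $\{1,\dots,n\}$, $A_{\sigma(1:n)}$ is the sequence whose $i$-th entry is $A_{\sigma(i)}$. A map $D:\Omega^n\to\mathbb{R}$ is a pseudo $n$-metric if for all $A_1,\dots,A_{n+1}\in\Omega$ and all permutations $\sigma$: (1) $D(A_{1:n})\ge 0$; (2) $D(A_{1:n})=D(A_{\sigma(1:n)})$; (3) $D(A_{1:n})\le\sum_{i=1}^n D(A^i_{1:n,n+1})$ (generalized triangle inequality); (4) $D(A,\dots,A)=0$ for all $A\in\Omega$ (self-identity). *)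

From HB Require Import structures.
From mathcomp Require Import all_boot all_order all_algebra all_fingroup.
From mathcomp Require Import classical_sets reals.
Set Implicit Arguments. Unset Strict Implicit. Unset Printing Implicit Defensive.
Import Order.TTheory GRing.Theory Num.Theory.
Local Open Scope classical_set_scope.
Local Open Scope ring_scope.

Section Defs.
Variable R : realType.
Variable T : Type.

Definition pseudometric_on (Om : set T) (d : T -> T -> R) : Prop :=
  forall A B C, Om A -> Om B -> Om C ->
    [/\ 0 <= d A B, d A A = 0, d A B = d B A & d A C <= d A B + d B C].

Definition replace_at (n : nat) (A : 'I_n -> T) (i : 'I_n) (A' : T) : 'I_n -> T :=
  fun j => if j == i then A' else A j.

Definition pseudo_n_metric_on (n : nat) (Om : set T) (D : ('I_n -> T) -> R) : Prop :=
  (forall A : 'I_n -> T, (forall i, Om (A i)) -> 0 <= D A) /\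
  (forall (A : 'I_n -> T) (s : 'S_n), (forall i, Om (A i)) ->
      D A = D (fun i => A (s i))) /\
  (forall (A : 'I_n -> T) (A' : T), (forall i, Om (A i)) -> Om A' ->
      D A <= \sum_(i < n) D (replace_at A i A')) /\
  (forall X, Om X -> D (fun _ => X) = 0).

(* Fermat distance: the infimum over B in Om of sum_i d(A_i, B)
   (equal to the minimum whenever it is attained). *)
Definition fermat_dist (n : nat) (Om : set T) (d : T -> T -> R) (A : 'I_n -> T) : R :=
  inf [set (\sum_(i < n) d (A i) B) | B in Om].
End Defs.

From mathcomp Require Import all_boot all_order all_algebra all_fingroup.
From mathcomp Require Import classical_sets reals.
Set Implicit Arguments. Unset Strict Implicit. Unset Printing Implicit Defensive.
Import Order.TTheory GRing.Theory Num.Theory.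
Local Open Scope classical_set_scope.
Local Open Scope ring_scope.

(* For the
   generalized triangle inequality, let B_i be a (near-)Fermat point of the
   configuration A with its i-th entry replaced by A'.  Then
   d_F(A) <= sum_j d(A_j, A'), and d(A_j, A') <= d(A_j, B_k) + d(B_k, A')
   for any k <> j; both terms occur in the Fermat sum of the k-th
   configuration.  Pairing each j with k = j + 1 (mod n), which needs n >= 2,
   charges every such sum at most once. *)

Lemma ler_sum_inf (R : realType) (I : finType) (S : I -> set R) (x : R) :
  (forall i, has_inf (S i)) ->
  (forall s : I -> R, (forall i, S i (s i)) -> x <= \sum_i s i) ->
  x <= \sum_i inf (S i).
Proof.
move=> infS x_le; apply/ler_addgt0Pr => e e_gt0.
pose eps := e / #|I|.+1%:R.
have eps_gt0 : 0 < eps by rewrite divr_gt0 ?ltr0n.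
have [s Ss s_lt] := fin_all_exists2 (fun i => inf_adherent eps_gt0 (infS i)).
apply: le_trans (x_le s Ss) _.
apply: le_trans (ler_sum _ (fun i _ => ltW (s_lt i))) _.
rewrite big_split /= sumr_const lerD2l.
have <- : eps *+ #|I|.+1 = e by rewrite -mulr_natr divfK ?pnatr_eq0.
by rewrite ler_wpMn2l ?ltW.
Qed.

Lemma ordS_neq n (j : 'I_n) : (2 <= n)%N -> ordS j != j.
Proof.
move=> n2; apply/eqP => /(congr1 val) /=.
case: (ltngtP j.+1 n) => [Sj_lt|n_lt|Sj_n].
- by rewrite modn_small // => /esym/n_Sn.
- by move: n_lt; rewrite ltnS leqNgt ltn_ord.
- by rewrite Sj_n modnn => j0; move: Sj_n n2; rewrite -j0 => <-.
Qed.

Section FermatDistance.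
Variables (R : realType) (T : Type) (Om : set T) (d : T -> T -> R).
Hypothesis hd : pseudometric_on Om d.
Variable n : nat.
Implicit Types (A : 'I_n -> T) (X : T).

Local Notation D := (fermat_dist Om d (n:=n)).
Local Notation fermat_sums A := [set (\sum_(i < n) d (A i) B) | B in Om].

Lemma fermat_sums_ge0 A : (forall i, Om (A i)) -> lbound (fermat_sums A) 0.
Proof.
move=> OmA _ [B OmB <-]; apply: sumr_ge0 => i _.
by have [] := hd (OmA i) OmB OmB.
Qed.

Lemma fermat_sums_has_inf A :
  (forall i, Om (A i)) -> Om !=set0 -> has_inf (fermat_sums A).
Proof.
move=> OmA [B OmB]; split; first by exists (\sum_i d (A i) B), B.
by exists 0; exact: fermat_sums_ge0.
Qed.

Lemma fermat_dist_le A B :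
  (forall i, Om (A i)) -> Om B -> D A <= \sum_i d (A i) B.
Proof.
move=> OmA OmB; apply: ge_inf; last by exists B.
by exists 0; exact: fermat_sums_ge0.
Qed.

Lemma fermat_dist_ge0 A : (forall i, Om (A i)) -> Om !=set0 -> 0 <= D A.
Proof.
by move=> OmA [B OmB]; apply: lb_le_inf; [exists (\sum_i d (A i) B), B|
  exact: fermat_sums_ge0].
Qed.

Lemma fermat_dist_perm A (s : 'S_n) : D A = D (fun i => A (s i)).
Proof.
rewrite /fermat_dist; congr inf; apply: eq_imagel => B _.
exact: (reindex_inj (@perm_inj _ s)).
Qed.

Lemma fermat_dist_cst X : Om X -> D (fun _ => X) = 0.
Proof.
move=> OmX; apply/le_anti/andP; split; last by apply: fermat_dist_ge0; last exists X.
apply: le_trans (fermat_dist_le (fun _ => OmX) OmX) _.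
by rewrite big1 // => i _; have [] := hd OmX OmX OmX.
Qed.

Lemma replace_at_Om A i X :
  (forall j, Om (A j)) -> Om X -> forall j, Om (replace_at A i X j).
Proof. by move=> OmA OmX j; rewrite /replace_at; case: eqP. Qed.

Lemma sum_dist_le_sum_replace_at A X (B : 'I_n -> T) : (2 <= n)%N ->
  (forall i, Om (A i)) -> Om X -> (forall i, Om (B i)) ->
  \sum_j d (A j) X <= \sum_i \sum_j d (replace_at A i X j) (B i).
Proof.
move=> n2 OmA OmX OmB; rewrite [leRHS](reindex_inj (@ordS_inj n)).
apply: ler_sum => j _; set k := ordS j.
have kj : k != j by exact: ordS_neq.
rewrite (bigD1 k) //= (bigD1 j) 1?eq_sym //= /replace_at eqxx eq_sym (negbTE kj).
have [_ _ _ tri] := hd (OmA j) (OmB k) OmX.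
have [_ _ symXB _] := hd OmX (OmB k) OmX.
rewrite addrCA symXB; apply: (le_trans tri); rewrite lerD2l lerDl.
apply: sumr_ge0 => l _.
by have [] := hd (replace_at_Om k OmA OmX l) (OmB k) (OmB k).
Qed.

Lemma fermat_dist_triangle A X : (2 <= n)%N ->
  (forall i, Om (A i)) -> Om X -> D A <= \sum_i D (replace_at A i X).
Proof.
move=> n2 OmA OmX; apply: le_trans (fermat_dist_le OmA OmX) _.
apply: ler_sum_inf => [i|s Ss].
  by apply: fermat_sums_has_inf; [exact: replace_at_Om | exists X].
have [B OmB sB] := fin_all_exists2 Ss.
rewrite (eq_bigr _ (fun i _ => esym (sB i))).
exact: sum_dist_le_sum_replace_at.
Qed.

End FermatDistance.

Theorem theorem1 (R : realType) (m n : nat) (Om : set 'M[R]_m)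
    (d : 'M[R]_m -> 'M[R]_m -> R) :
  pseudometric_on Om d -> (2 <= n)%N ->
  pseudo_n_metric_on Om (fermat_dist Om d (n:=n)).
Proof.
move=> hd n2; split; [|split; [|split]].
- by move=> A OmA; apply: fermat_dist_ge0 => //; exists (A (Ordinal (ltnW n2))).
- by move=> A s _; exact: fermat_dist_perm.
- by move=> A X OmA OmX; exact: fermat_dist_triangle.
- by move=> X OmX; exact: fermat_dist_cst.
Qed.
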